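(* Let $d,n\in\mathbb{N}$ be such that $h_c(d,n)$ is finite (defined). For every $\alpha\in(0,1)$ there exists $\beta=\beta(\alpha,h_c(d,n))\in(0,1)$ such that the following holds: for any finite family $\mathcal{F}$ of axis-parallel boxes in $\mathbb{R}^d$, if at least an $\alpha$ fraction of all $h_c(d,n)$-element subfamilies of $\mathcal{F}$ are $n$-pierceable, then there exists a subfamily of $\mathcal{F}$ of size at least $\beta|\mathcal{F}|$ which is $n$-pierceable.
   Context: An axis-parallel box in $\mathbb{R}^d$ is a set $[\alpha_1,\beta_1]\times\dots\times[\alpha_d,\beta_d]$ with $\alpha_j\le\beta_j$. A family $\mathcal{F}$ is $n$-pierceable if there is $A\subseteq\mathbb{R}^d$, $|A|\le n$, meeting every member of $\mathcal{F}$. Given families $\mathcal{F}_1,\dots,\mathcal{F}_m$, a colorful $t$-tuple is a tuple $(C_1,\dots,C_t)$ with $C_j\in\mathcal{F}_{i_j}$ for pairwise distinct indices $i_1,\dots,i_t\in[m]$. $h_c(d,n)$ denotes the smallest positive integer $h$ such that whenever $\mathcal{F}_1,\dots,\mathcal{F}_h$ are collections of axis-parallel boxes in $\mathbb{R}^d$ with every colorful $h$-tuple $n$-pierceable, some $\mathcal{F}_i$ is $n$-pierceable (e.g. $h_c(1,n)=n+1$, $h_c(d,2)=3d$). *)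

From HB Require Import structures.
From mathcomp Require Import all_boot all_order all_algebra.
From mathcomp Require Import boolp reals.
Set Implicit Arguments. Unset Strict Implicit. Unset Printing Implicit Defensive.
Import Order.TTheory GRing.Theory Num.Theory.
Local Open Scope ring_scope.

Definition point (R : numDomainType) (d : nat) := 'I_d -> R.

Record box (R : numDomainType) (d : nat) := Box {
  lo : 'I_d -> R;
  hi : 'I_d -> R;
  box_ok : forall j, lo j <= hi j }.

Definition in_box (R : numDomainType) (d : nat) (x : point R d) (B : box R d) : Prop :=
  forall j, lo B j <= x j <= hi B j.

Definition family (R : numDomainType) (d : nat) := box R d -> Prop.

(* F is n-pierceable: some set A of at most n points meets every member of F.
   A is given as an n-indexed list of points (repetitions allowed, so |A| <= n). *)
Definition pierceable (R : numDomainType) (d n : nat) (F : family R d) : Prop :=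
  exists p : 'I_n -> point R d, forall B, F B -> exists i, in_box (p i) B.

Definition tuple_family (R : numDomainType) (d t : nat) (C : 'I_t -> box R d)
  : family R d := fun B => exists j, B = C j.

Definition colorful (R : numDomainType) (d m t : nat) (F : 'I_m -> family R d)
  (C : 'I_t -> box R d) : Prop :=
  exists idx : 'I_t -> 'I_m, injective idx /\ forall j, F (idx j) (C j).

Definition colorful_helly (R : numDomainType) (d n h : nat) : Prop :=
  forall F : 'I_h -> family R d,
    (forall C : 'I_h -> box R d, colorful F C -> pierceable n (tuple_family C)) ->
    exists i, pierceable n (F i).

(* h = h_c(d,n): the smallest positive integer with the colorful Helly property
   (in particular h_c(d,n) is defined/finite). *)
Definition is_hc (R : numDomainType) (d n h : nat) : Prop :=
  (0 < h)%N /\ colorful_helly R d n h /\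
  forall h', (0 < h')%N -> colorful_helly R d n h' -> (h <= h')%N.

Definition subfamily (R : numDomainType) (d N : nat) (F : 'I_N -> box R d)
  (S : {set 'I_N}) : family R d := fun B => exists2 i, i \in S & B = F i.

(* Call a set of indices good when the boxes it indexes are n-pierceable.  Colorful Helly
   says: if every colourful choice from index sets X_1, ..., X_h spans a good set, some X_i is
   good.  More generally, let Q be a property of j-tuples with this colourful property
   (every colouring whose transversals all satisfy Q has a good class); we show by induction
   on j that if a positive fraction of all j-tuples satisfy Q, some good set has linear size.
   Peel off the last coordinate.  Either for some bad h-tuple A a dense set of (j-1)-tuples S
   has (S, a) in Q for every entry a of A -- these inherit the colourful property and we
   recurse -- or, by double counting, some fibre V = {v | (S, v) in Q} has linear size and
   contains few bad h-tuples.  Inside V, greedily pick disjoint bad sets of size at most h: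
   if |V|/2h of them were found, colouring by them would yield (|V|/2h)^h distinct bad
   tuples, too many; so the process stops with a good set covering half of V.  The theorem
   starts from Q = "the h-tuple spans a good set", dense because good h-sets are. *)

From Pilot Require Import Defs.
From HB Require Import structures.
From mathcomp Require Import all_boot all_order all_algebra.
From mathcomp Require Import boolp reals.
From mathcomp Require Import zify ring lra.
Import Order.TTheory GRing.Theory Num.Theory.
Set Implicit Arguments. Unset Strict Implicit. Unset Printing Implicit Defensive.

Section Transversals.
Variable T : finType.
Implicit Types (P : {set T} -> bool) (V W : {set T}).

Definition tuple_set j (t : {ffun 'I_j -> T}) : {set T} := [set t l | l : 'I_j].

Lemma card_tuple_set j (t : {ffun 'I_j -> T}) : #|tuple_set t| <= j.
Proof. by apply: leq_trans (leq_imset_card _ _) _; rewrite card_ord. Qed.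

Definition transversal_helly j P (Q : pred {ffun 'I_j -> T}) :=
  forall X : 'I_j -> {set T},
    (forall t : {ffun 'I_j -> T}, (forall l, t l \in X l) -> Q t) -> exists l, P (X l).

Definition colorful_helly_pred k P :=
  transversal_helly P (fun t : {ffun 'I_k -> T} => P (tuple_set t)).

Definition bad_tuples k P V :=
  [set A : {ffun 'I_k -> T} | [forall l, A l \in V] && ~~ P (tuple_set A)].

Lemma exists_bad_transversal j P (Q : pred {ffun 'I_j -> T}) (X : 'I_j -> {set T}) :
  transversal_helly P Q -> (forall l, ~~ P (X l)) ->
  exists2 t : {ffun 'I_j -> T}, (forall l, t l \in X l) & ~~ Q t.
Proof.
move=> HQ nPX; apply: contrapT => noT.
have [|l] := HQ X; last by rewrite (negPf (nPX l)).
by move=> t tX; apply: contrapT => /negP nQ; apply: noT; exists t.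
Qed.

Lemma transversal_helly0 P (Q : pred {ffun 'I_0 -> T}) t :
  transversal_helly P Q -> ~~ Q t.
Proof.
move=> HQ; have [|t' _] := @exists_bad_transversal _ P Q (fun _ => set0) HQ; first by case.
by congr (~~ Q _); apply/ffunP => -[].
Qed.

Section Packing.
Variables (k : nat) (P : {set T} -> bool).
Hypothesis P_helly : colorful_helly_pred k P.

Definition bad_packing V t (E : nat -> {set T}) :=
  (forall i j, i < t -> j < t -> i != j -> [disjoint E i & E j]) /\
  (forall i, i < t -> [/\ E i \subset V, ~~ P (E i) & #|E i| <= k]).

Lemma card_bigcup_packing V t E : bad_packing V t E -> #|\bigcup_(i < t) E i| <= t * k.
Proof.
case=> _; elim: t => [|t IH] sE; first by rewrite big_ord0 cards0.
rewrite big_ord_recr /= mulSnr; apply: leq_trans (leq_card_setU _ _).1 _.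
rewrite leq_add ?IH //; last by case: (sE t (ltnSn t)).
by move=> i /ltnW /sE.
Qed.

Lemma good_or_bad_packing V t :
  (exists W, P W /\ #|V| <= #|W| + k * t) \/ exists E, bad_packing V t E.
Proof.
elim: t => [|t [[W [PW leVW]]|[E packE]]].
- by right; exists (fun _ => set0); split.
- by left; exists W; split => //; rewrite mulnS; lia.
set U := \bigcup_(i < t) E i.
have leVU : #|V| <= #|V :\: U| + k * t.
  rewrite -(cardsID U V) addnC mulnC leq_add2l.
  by apply: leq_trans (card_bigcup_packing packE); apply/subset_leq_card/subsetIr.
have [PVU|nPVU] := boolP (P (V :\: U)).
  by left; exists (V :\: U); split => //; rewrite mulnS; lia.
have [x xVU nPx] := exists_bad_transversal (X := fun _ => V :\: U) P_helly (fun _ => nPVU).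
have sxVU : tuple_set x \subset V :\: U by apply/subsetP => _ /imsetP[l _ ->].
right; exists (fun i => if i == t then tuple_set x else E i).
have disjxE i : i < t -> [disjoint tuple_set x & E i].
  move=> it; apply: (disjointW sxVU (bigcup_sup (Ordinal it) isT : E i \subset U)).
  by rewrite disjoints_subset setDE subsetIr.
case: packE => dE sE; split.
- move=> i j; rewrite !ltnS (leq_eqVlt i) (leq_eqVlt j).
  move=> /predU1P[-> | it] /predU1P[-> | jt]; rewrite ?eqxx ?(ltn_eqF it) ?(ltn_eqF jt) //.
  + by move=> _; apply: disjxE.
  + by move=> _; rewrite disjoint_sym; apply: disjxE.
  + exact: dE.
- move=> i; rewrite ltnS leq_eqVlt => /predU1P[-> | it]; last by rewrite (ltn_eqF it); apply: sE.
  by rewrite eqxx card_tuple_set (subset_trans sxVU) ?subsetDl.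
Qed.

Lemma packing_card_bad_tuples V t E : bad_packing V t E -> t ^ k <= #|bad_tuples k P V|.
Proof.
case=> dE sE.
have nPE i : i < t -> ~~ P (E i) by case/sE.
have bad_io (io : {ffun 'I_k -> 'I_t}) : exists x : {ffun 'I_k -> T},
    (forall l, x l \in E (io l)) /\ ~~ P (tuple_set x).
  have [x xE nPx] := exists_bad_transversal (X := fun l => E (io l)) P_helly
    (fun l => nPE _ (ltn_ord (io l))).
  by exists x.
have [f fP] := choice bad_io.
have f_inj : injective f.
  move=> io1 io2 eqf; apply/ffunP => l; apply/val_inj/eqP; apply: contraT => neq.
  have xE1 := (fP io1).1 l; have xE2 := (fP io2).1 l; rewrite eqf in xE1.
  by rewrite (disjointFr (dE _ _ (ltn_ord _) (ltn_ord _) neq) xE1) in xE2.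
rewrite -{1}[t](card_ord t) -[k in (_ ^ k)%N](card_ord k) -card_ffun -(card_imset _ f_inj).
apply/subset_leq_card/subsetP => _ /imsetP[io _ ->].
rewrite inE (fP io).2 andbT; apply/forallP => l.
by have [/subsetP + _ _] := sE _ (ltn_ord (io l)); apply; exact: (fP io).1.
Qed.

Lemma few_bad_tuples_good_set V : 0 < k -> (forall x, P [set x]) -> 0 < #|V| ->
  2 * (4 * k) ^ k * #|bad_tuples k P V| <= #|V| ^ k ->
  exists2 W, P W & #|V| <= 4 * k * #|W|.
Proof.
move=> k_gt0 P1 V_gt0 few_bad.
have [small|large] := ltnP #|V| (4 * k).
  have [x _] := card_gt0P V_gt0.
  by exists [set x]; rewrite // cards1 muln1 ltnW.
set mu := #|V| %/ (2 * k).
have [[W [PW leVW]]|[E packE]] := good_or_bad_packing V mu.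
  exists W => //; have := leq_divM #|V| (2 * k); rewrite -/mu.
  have : 2 * #|W| <= 4 * k * #|W| by rewrite leq_mul2r; lia.
  lia.
have V_le_mu : #|V| <= 4 * k * mu.
  have := ltn_ceil #|V| (_ : 0 < 2 * k); rewrite -/mu; lia.
have : (4 * k) ^ k * mu ^ k <= (4 * k) ^ k * #|bad_tuples k P V|.
  by rewrite leq_mul2l (packing_card_bad_tuples packE) orbT.
have : #|V| ^ k <= (4 * k) ^ k * mu ^ k by rewrite -expnMn leq_exp2r.
have : 0 < #|V| ^ k by rewrite expn_gt0 V_gt0.
lia.
Qed.

End Packing.

Definition frcons j (S : {ffun 'I_j -> T}) (v : T) : {ffun 'I_j.+1 -> T} :=
  [ffun i => if unlift ord_max i is Some i' then S i' else v].

Definition fbelast j (t : {ffun 'I_j.+1 -> T}) : {ffun 'I_j -> T} :=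
  [ffun i => t (lift ord_max i)].

Lemma fbelast_frcons j (S : {ffun 'I_j -> T}) v : fbelast (frcons S v) = S.
Proof. by apply/ffunP => i; rewrite !ffunE liftK. Qed.

Lemma frcons_max j (S : {ffun 'I_j -> T}) v : frcons S v ord_max = v.
Proof. by rewrite ffunE unlift_none. Qed.

Lemma frcons_fbelast j (t : {ffun 'I_j.+1 -> T}) : frcons (fbelast t) (t ord_max) = t.
Proof. by apply/ffunP => i; rewrite ffunE; case: unliftP => [i' ->|->]; rewrite ?ffunE. Qed.

Section Fibres.
Variables (j : nat) (Q : pred {ffun 'I_j.+1 -> T}).

Definition fibre (S : {ffun 'I_j -> T}) := [set v | Q (frcons S v)].

Lemma card_fibres : #|[set t | Q t]| = \sum_S #|fibre S|.
Proof.
rewrite -sum1dep_card (eq_bigr (fun S => \sum_v (Q (frcons S v) : nat))); last first.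
  by move=> S _; rewrite -sum1dep_card big_mkcond.
rewrite big_mkcond pair_big /= (reindex (fun p => frcons p.1 p.2)) //=.
exists (fun t => (fbelast t, t ord_max)) => [[S v] _|t _] /=.
  by rewrite fbelast_frcons frcons_max.
by rewrite frcons_fbelast.
Qed.

Lemma sum_card_bad_fibres k P :
  \sum_S #|bad_tuples k P (fibre S)| =
  \sum_(A : {ffun 'I_k -> T} | ~~ P (tuple_set A))
     #|[set S | [forall l, Q (frcons S (A l))]]|.
Proof.
under eq_bigr do rewrite -sum1dep_card big_mkcond /=.
rewrite exchange_big [RHS]big_mkcond /=; apply: eq_bigr => A _.
case: (P (tuple_set A)) => /=; first by rewrite big1 // => S _; rewrite andbF.
rewrite -sum1dep_card [RHS]big_mkcond; apply: eq_bigr => S _.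
by rewrite andbT; congr (if _ then _ else _); apply: eq_forallb => l; rewrite inE.
Qed.

Lemma transversal_helly_fibre k P (A : {ffun 'I_k -> T}) :
  transversal_helly P Q -> ~~ P (tuple_set A) ->
  transversal_helly P (fun S : {ffun 'I_j -> T} => [forall l, Q (frcons S (A l))]).
Proof.
move=> HQ nPA X HX.
have [|i] := HQ (fun i => if unlift ord_max i is Some i' then X i' else tuple_set A).
  move=> t tX; have := tX ord_max; rewrite unlift_none => /imsetP[l _ tA].
  have tX' i' : fbelast t i' \in X i'.
    by rewrite ffunE; have := tX (lift ord_max i'); rewrite liftK.
  by have /forallP/(_ l) := HX _ tX'; rewrite -tA frcons_fbelast.
by case: unliftP => [i' _ PX|_ PA]; [exists i' | rewrite PA in nPA].
Qed.

End Fibres.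
End Transversals.

Local Open Scope ring_scope.

Lemma exists_ltr_sum (R : realDomainType) (I : finType) (F G : I -> R) :
  \sum_i F i < \sum_i G i -> exists i, F i < G i.
Proof.
apply: contraPP => /forallNP noi; apply/negP; rewrite -leNgt.
by apply: ler_sum => i _; rewrite leNgt; apply/negP/noi.
Qed.

Lemma sum_card_bad_fibres_le (R : realFieldType) (T : finType) j k P
    (Q : pred {ffun 'I_j.+1 -> T}) (a : R) :
  0 <= a ->
  (forall A : {ffun 'I_k -> T}, ~~ P (tuple_set A) ->
     #|[set S | [forall l, Q (frcons S (A l))]]|%:R <= a) ->
  \sum_S #|bad_tuples k P (fibre Q S)|%:R <= #|T|%:R ^+ k * a.
Proof.
move=> a_ge0 sparse; rewrite -natr_sum sum_card_bad_fibres natr_sum.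
apply: le_trans (_ : \sum_(A | ~~ P (tuple_set A)) a <= _); first exact: ler_sum.
rewrite sumr_const -(mulr_natl a); apply: (ler_wpM2r a_ge0).
by rewrite -natrX ler_nat -[k in (_ ^ k)%N]card_ord -card_ffun max_card.
Qed.

(* Averaging: summed over [S], the bound [g M + w b_S] is at most [3/2 g M^(j+1)], less than
   [alpha M^(j+1) <= \sum_S |fibre S|]; the weight [w] is chosen so that exceeding this bound
   also forces [c b_S < (g M)^k]. *)
Lemma exists_rich_fibre (R : realFieldType) (T : finType) j k P
    (Q : pred {ffun 'I_j.+1 -> T}) (alpha c : R) :
  0 < alpha -> 0 < c -> (0 < #|T|)%N ->
  alpha * (#|T| ^ j.+1)%:R <= #|[set t | Q t]|%:R ->
  (forall A : {ffun 'I_k -> T}, ~~ P (tuple_set A) ->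
     #|[set S | [forall l, Q (frcons S (A l))]]|%:R
       <= (alpha / 2) ^+ k.+1 / (2 * c) * (#|T| ^ j)%:R) ->
  exists S, alpha / 2 * #|T|%:R <= #|fibre Q S|%:R /\
    c * #|bad_tuples k P (fibre Q S)|%:R <= #|fibre Q S|%:R ^+ k.
Proof.
move=> alpha_gt0 c_gt0 T_gt0 dense sparse.
set M : R := #|T|%:R; set g := alpha / 2; set G := (g * M) ^+ k.
have M_gt0 : 0 < M by rewrite ltr0n.
have g_gt0 : 0 < g by rewrite divr_gt0.
have G_gt0 : 0 < G by apply/exprn_gt0/mulr_gt0.
set w := M * c / G.
have w_ge0 : 0 <= w by apply: divr_ge0; [apply: mulr_ge0|]; apply: ltW.
have a_gt0 : 0 < g ^+ k.+1 / (2 * c) * (#|T| ^ j)%:R.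
  apply: mulr_gt0; last by rewrite ltr0n expn_gt0 T_gt0.
  by rewrite divr_gt0 ?exprn_gt0 // mulr_gt0.
have bad_sum := sum_card_bad_fibres_le (ltW a_gt0) sparse.
pose b S : R := #|bad_tuples k P (fibre Q S)|%:R.
have [S ltS] : exists S, g * M + w * b S < #|fibre Q S|%:R.
  apply: exists_ltr_sum; rewrite -natr_sum -card_fibres; apply: lt_le_trans dense.
  rewrite big_split /= sumr_const card_ffun card_ord -mulr_sumr.
  apply: le_lt_trans (_ : g * M ^+ j.+1 + g / 2 * M ^+ j.+1 < _).
    apply: lerD; first by rewrite -[g * M *+ _]mulr_natr natrX -/M exprS mulrA.
    apply: le_trans (ler_wpM2l w_ge0 bad_sum) _.
    rewrite natrX -/M -/g (_ : w * _ = g / 2 * M ^+ j.+1) // /w /G exprMn !exprS.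
    by field; rewrite !expf_neq0 ?gt_eqF.
  rewrite natrX -/M /g; have := exprn_gt0 j.+1 M_gt0; move: (M ^+ j.+1) => X X_gt0.
  nra.
have fibre_le_M : #|fibre Q S|%:R <= M by rewrite ler_nat max_card.
have wb_ge0 : 0 <= w * b S by rewrite mulr_ge0 ?ler0n.
exists S; split; first lra.
have gM_le : 0 <= g * M <= #|fibre Q S|%:R by rewrite mulr_ge0 ?ltW //=; lra.
apply: le_trans (_ : G <= _); last by rewrite lerXn2r ?nnegrE ?ler0n; case/andP: gM_le.
have : w * b S * G < M * G by rewrite ltr_pM2r //; lra.
by rewrite /w mulrAC divfK ?gt_eqF // -mulrA ltr_pM2l // => /ltW.
Qed.

Lemma dense_transversals_large_good_set (R : realFieldType) (k j : nat) (alpha : R) :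
  (0 < k)%N -> 0 < alpha -> exists2 beta : R, 0 < beta &
  forall (T : finType) (P : {set T} -> bool), P set0 -> (forall x, P [set x]) ->
    colorful_helly_pred k P ->
    forall Q : pred {ffun 'I_j -> T}, transversal_helly P Q ->
    alpha * (#|T| ^ j)%:R <= #|[set t | Q t]|%:R ->
    exists2 S, P S & beta * #|T|%:R <= #|S|%:R.
Proof.
move=> k_gt0; elim: j alpha => [|j IH] alpha alpha_gt0.
  exists 1 => // T P _ _ _ Q HQ dense; exfalso.
  have noQ : [set t | Q t] = set0.
    by apply/setP => t; rewrite !inE (negPf (transversal_helly0 t HQ)).
  by move: dense; rewrite noQ cards0 expn0 mulr1 leNgt alpha_gt0.
set g := alpha / 2; set c : R := (2 * (4 * k) ^ k)%:R.
have c_gt0 : 0 < c by rewrite ltr0n muln_gt0 expn_gt0 muln_gt0 k_gt0.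
have g_gt0 : 0 < g by rewrite divr_gt0.
have a_gt0 : 0 < g ^+ k.+1 / (2 * c).
  by rewrite divr_gt0 ?exprn_gt0 // mulr_gt0.
have [b b_gt0 Hb] := IH _ a_gt0.
have gk_gt0 : 0 < g / (4 * k)%:R by rewrite divr_gt0 // ltr0n muln_gt0.
exists (Num.min b (g / (4 * k)%:R)); first by rewrite lt_min b_gt0.
move=> T P P0 P1 HP Q HQ dense.
have [T0 | T_gt0] := posnP #|T|.
  by exists set0 => //; rewrite T0 mulr0 cards0.
have [[A nPA denseA] | sparse] := pselect (exists2 A : {ffun 'I_k -> T},
    ~~ P (tuple_set A) &
    g ^+ k.+1 / (2 * c) * (#|T| ^ j)%:R <= #|[set S | [forall l, Q (frcons S (A l))]]|%:R).
  have [S PS leS] := Hb T P P0 P1 HP _ (transversal_helly_fibre HQ nPA) denseA.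
  by exists S => //; apply: le_trans leS; rewrite ler_wpM2r ?ge_min ?lexx.
have sparse_fibres (A : {ffun 'I_k -> T}) : ~~ P (tuple_set A) ->
    #|[set S | [forall l, Q (frcons S (A l))]]|%:R <= g ^+ k.+1 / (2 * c) * (#|T| ^ j)%:R.
  by move=> nPA; apply/ltW; rewrite ltNge; apply/negP => le; apply: sparse; exists A.
have [S [rich few_bad]] := exists_rich_fibre alpha_gt0 c_gt0 T_gt0 dense sparse_fibres.
have fibre_gt0 : (0 < #|fibre Q S|)%N.
  by rewrite -(ltr0n R); apply: lt_le_trans rich; rewrite mulr_gt0 ?ltr0n.
have few_bad_nat :
    (2 * (4 * k) ^ k * #|bad_tuples k P (fibre Q S)| <= #|fibre Q S| ^ k)%N.
  by rewrite -(ler_nat R) natrM natrX.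
have [W PW leW] := few_bad_tuples_good_set HP k_gt0 P1 fibre_gt0 few_bad_nat.
exists W => //; apply: le_trans (_ : g / (4 * k)%:R * #|T|%:R <= _).
  by rewrite ler_wpM2r ?ler0n // ge_min lexx orbT.
rewrite mulrAC ler_pdivrMr ?ltr0n ?muln_gt0 //; apply: le_trans rich _.
by rewrite mulrC -natrM ler_nat.
Qed.

Lemma tuple_set_enum_val (T : finType) (S : {set T}) :
  tuple_set [ffun i => @enum_val _ (mem S) i] = S.
Proof.
apply/setP => x; apply/imsetP/idP => [[i _ ->]|xS]; first by rewrite ffunE enum_valP.
by exists (enum_rank_in xS x); rewrite // ffunE enum_rankK_in.
Qed.

Lemma card_ksets_le_ktuples (T : finType) k (P : {set T} -> bool) :
  (#|[set S : {set T} | (#|S| == k) && P S]|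
     <= #|[set t : {ffun 'I_k -> T} | P (tuple_set t)]|)%N.
Proof.
apply: leq_trans (leq_imset_card (@tuple_set T k) _).
apply/subset_leq_card/subsetP => S; rewrite inE => /andP[/eqP <- PS].
by apply/imsetP; eexists; last exact/esym/tuple_set_enum_val; rewrite inE tuple_set_enum_val.
Qed.

Lemma expn_le_bin N k : (2 * k <= N -> N ^ k <= 2 ^ k * k`! * 'C(N, k))%N.
Proof.
move=> le2kN.
have -> : (N ^ k = \prod_(i < k) N)%N by rewrite prod_nat_const card_ord.
have -> : (2 ^ k = \prod_(i < k) 2)%N by rewrite prod_nat_const card_ord.
rewrite -mulnA [(k`! * _)%N]mulnC bin_ffact ffact_prod -big_split /=.
by apply: leq_prod => i _; have := ltn_ord i; lia.
Qed.

Lemma fractional_helly_sets (R : realFieldType) k (alpha : R) :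
  (0 < k)%N -> 0 < alpha ->
  exists2 beta : R, 0 < beta & forall (T : finType) (P : {set T} -> bool),
    P set0 -> (forall x, P [set x]) -> colorful_helly_pred k P ->
    alpha * 'C(#|T|, k)%:R <= #|[set S : {set T} | (#|S| == k) && P S]|%:R ->
    exists2 S, P S & beta * #|T|%:R <= #|S|%:R.
Proof.
move=> k_gt0 alpha_gt0; set D : R := (2 ^ k * k`!)%:R.
have D_gt0 : 0 < D by rewrite ltr0n muln_gt0 expn_gt0 fact_gt0.
have [b b_gt0 Hb] := dense_transversals_large_good_set k k_gt0 (divr_gt0 alpha_gt0 D_gt0).
exists (Num.min b (2 * k)%:R^-1); first by rewrite lt_min b_gt0 invr_gt0 ltr0n muln_gt0.
move=> T P P0 P1 HP dense.
have [small|large] := ltnP #|T| (2 * k).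
  have [x _|T0] := pickP T; last by exists set0; rewrite // (eq_card0 T0) mulr0 cards0.
  exists [set x] => //; rewrite cards1.
  apply: le_trans (_ : (2 * k)%:R^-1 * #|T|%:R <= 1).
    by rewrite ler_wpM2r ?ge_min ?lexx ?orbT.
  by rewrite mulrC ler_pdivrMr ?ltr0n ?muln_gt0 // mul1r ler_nat ltnW.
have [|S PS leS] := Hb T P P0 P1 HP _ HP.
  apply: le_trans (_ : alpha * 'C(#|T|, k)%:R <= _).
    rewrite -mulrA ler_pM2l // mulrC ler_pdivrMr // -natrM ler_nat mulnC.
    exact: expn_le_bin.
  by apply: le_trans dense _; rewrite ler_nat card_ksets_le_ktuples.
by exists S => //; apply: le_trans leS; rewrite ler_wpM2r ?ler0n // ge_min lexx.
Qed.

Section Boxes.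
Variables (R : numDomainType) (d : nat).

Lemma sub_pierceable n (F G : Defs.family R d) :
  (forall B, G B -> F B) -> pierceable n F -> pierceable n G.
Proof. by move=> sGF [p Hp]; exists p => B /sGF; apply: Hp. Qed.

Lemma not_pierceable0 (F : Defs.family R d) B : F B -> ~ pierceable 0 F.
Proof. by move=> FB [p /(_ B FB)] [[]]. Qed.

Lemma pierceable_set0 n N (F : 'I_N -> box R d) : pierceable n (subfamily F set0).
Proof. by exists (fun _ _ => 0) => B [i]; rewrite inE. Qed.

Lemma pierceable_set1 n N (F : 'I_N -> box R d) i :
  (0 < n)%N -> pierceable n (subfamily F [set i]).
Proof.
move=> n_gt0; exists (fun _ => lo (F i)) => B [i']; rewrite inE => /eqP -> ->.
by exists (Ordinal n_gt0) => j; rewrite lexx box_ok.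
Qed.

Lemma colorful_helly_pierceable0 : colorful_helly R d 0 1.
Proof.
move=> Fs HC; exists ord0; exists (fun _ _ => 0) => B FB; exfalso.
have col : colorful Fs (fun _ : 'I_1 => B) by exists id; split => // j; rewrite (ord1 j).
by apply: (not_pierceable0 (B := B)) (HC _ col); exists ord0.
Qed.

Lemma colorful_helly_pierceable n h N (F : 'I_N -> box R d) :
  colorful_helly R d n h ->
  colorful_helly_pred h (fun S => `[< pierceable n (subfamily F S) >]).
Proof.
move=> HC X HX.
have [|l] := HC (fun l => subfamily F (X l)); last by exists l; apply/asboolP.
move=> C [idx [idx_inj CF]].
have colour_of j : exists i, i \in X (idx j) /\ C j = F i by case: (CF j) => i; exists i.
have [g gP] := choice colour_of.
pose t := [ffun l => g (invF idx_inj l)].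
have tX l : t l \in X l by rewrite ffunE; have [+ _] := gP (invF idx_inj l); rewrite f_invF.
apply: sub_pierceable (asboolW (HX t tX)) => B [j ->].
by exists (t (idx j)); rewrite ?imset_f // ffunE invF_f; exact: (gP j).2.
Qed.

Lemma is_hc_pierceable0 h : is_hc R d 0 h -> h = 1%N.
Proof.
case=> h_gt0 [_ h_min]; apply/eqP; rewrite eqn_leq h_gt0 andbT.
exact: h_min colorful_helly_pierceable0.
Qed.

End Boxes.

Unset Implicit Arguments.

Theorem theorem6 (R : realType) (h : nat) (alpha : R) :
  0 < alpha < 1 ->
  exists beta : R, 0 < beta < 1 /\
    forall (d n : nat), is_hc R d n h ->
    forall (N : nat) (F : 'I_N -> box R d),
      #|[set S : {set 'I_N} | (#|S| == h) &&
          `[< pierceable n (subfamily F S) >]]|%:R >= alpha * 'C(N, h)%:R ->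
      exists S : {set 'I_N}, #|S|%:R >= beta * N%:R /\ pierceable n (subfamily F S).
Proof.
move=> /andP[alpha_gt0 _].
have half_gt0 : 0 < 2^-1 :> R by rewrite invr_gt0.
have half_lt1 : 2^-1 < 1 :> R by rewrite invf_lt1 ?ltr1n.
have [->|h_gt0] := posnP h; first by exists 2^-1; split=> [|d n []]; rewrite ?half_gt0.
have [beta beta_gt0 Hbeta] := fractional_helly_sets h_gt0 alpha_gt0.
exists (Num.min beta 2^-1); split; first by rewrite lt_min beta_gt0 half_gt0 gt_min half_lt1 orbT.
move=> d n hc N F dense; have [_ [HC _]] := hc.
have [n0|n_gt0] := posnP n.
  (* h_c(d,0) = 1 and nonempty families are not 0-pierceable: density forces N = 0. *)
  subst n; have h1 := is_hc_pierceable0 hc.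
  suff N0 : N = 0%N by exists set0; split; [rewrite cards0 N0 mulr0 | exact: pierceable_set0].
  have no_sets : [set S : {set 'I_N} | (#|S| == h) && `[< pierceable 0 (subfamily F S) >]] = set0.
    apply/setP => S; rewrite !inE h1; apply/negP => /andP[/cards1P[i ->] /asboolP].
    by apply: not_pierceable0 (F i) _; exists i; rewrite ?inE.
  by move: dense; rewrite no_sets cards0 h1 bin1 pmulr_rle0 // lern0 => /eqP.
have [|S PS leS] := Hbeta _ (fun S => `[< pierceable n (subfamily F S) >])
  (asboolT (pierceable_set0 n F)) (fun i => asboolT (pierceable_set1 F i n_gt0))
  (colorful_helly_pierceable (F := F) HC); first by rewrite card_ord.
exists S; split; last exact/asboolP.
by apply: le_trans leS; rewrite card_ord ler_wpM2r ?ler0n // ge_min lexx.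
Qed.
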